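(* Let $n\ge 2$ and let $A$ be an associative (not necessarily unital) algebra over a field satisfying the identity $x_1x_2\cdots x_n=x_2x_3\cdots x_nx_1$ (i.e. the identity associated with the cycle $(1\,2\,\cdots\,n)\in S_n$). Then $A$ is eventually commutative of degree $n+1$.
   Context: An algebra $A$ satisfies an identity $x_1\cdots x_m=x_{\tau(1)}\cdots x_{\tau(m)}$ (with $\tau\in S_m$) if $a_1\cdots a_m=a_{\tau(1)}\cdots a_{\tau(m)}$ for all $a_1,\dots,a_m\in A$. $A$ is eventually commutative of degree $k$ if it satisfies $x_1\cdots x_k=x_{\tau(1)}\cdots x_{\tau(k)}$ for every $\tau\in S_k$. *)

From mathcomp Require Import all_boot all_order all_algebra all_fingroup.
Set Implicit Arguments. Unset Strict Implicit. Unset Printing Implicit Defensive.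
Import GRing.Theory.
Local Open Scope ring_scope.

Definition assoc_algebra (K : fieldType) (A : lmodType K) (mul : A -> A -> A) : Prop :=
  [/\ associative mul,
      (forall (k : K) (x y z : A), mul (k *: x + y) z = k *: mul x z + mul y z)
    & (forall (k : K) (x y z : A), mul x (k *: y + z) = k *: mul x y + mul x z)].

(* The empty product is set to 0 by convention;
   it is never used below since all words have length >= 2. *)
Fixpoint nprod (A : Type) (zero : A) (mul : A -> A -> A) (s : seq A) : A :=
  match s with
  | [::] => zero
  | [:: x] => x
  | x :: s' => mul x (nprod zero mul s')
  end.

(* A satisfies x_1 ... x_m = x_{tau 1} ... x_{tau m}  (indices 0-based). *)
Definition satisfies_identity (K : fieldType) (A : lmodType K) (mul : A -> A -> A)
  (m : nat) (tau : 'S_m) : Prop :=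
  forall a : 'I_m -> A,
    nprod 0 mul [seq a i | i <- enum 'I_m] = nprod 0 mul [seq a (tau i) | i <- enum 'I_m].

Definition eventually_commutative (K : fieldType) (A : lmodType K) (mul : A -> A -> A)
  (k : nat) : Prop :=
  forall tau : 'S_k, satisfies_identity mul tau.

(* The cycle (1 2 ... n) in S_n, i.e. i |-> i+1 mod n (0-based). *)
Definition cycle_perm (n : nat) : 'S_n := perm (@ordS_inj n).

From mathcomp Require Import all_boot all_order all_algebra all_fingroup.
From mathcomp Require Import zify.

(* Merging the last two letters of a word of length n+1 turns the cyclic
   identity for words of length n into invariance of (n+1)-fold products under
   rotation.  For a word p of length n-1, rotating p a b gives (b p) a, and the
   identity applied to the n-letter word b p turns this into p b a: the last two
   letters of an (n+1)-letter product commute, hence by rotation any two adjacent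
   ones do, and adjacent transpositions generate the symmetric group. *)

Set Implicit Arguments. Unset Strict Implicit. Unset Printing Implicit Defensive.

Section AdjacentSwapInvariance.
Variables (T : eqType) (R : Type) (m : nat) (f : seq T -> R).
Hypothesis f_swap : forall p x y q, size (p ++ x :: y :: q) = m ->
  f (p ++ x :: y :: q) = f (p ++ y :: x :: q).

Lemma swap_move_front p s x q : size (p ++ s ++ x :: q) = m ->
  f (p ++ s ++ x :: q) = f (p ++ x :: s ++ q).
Proof.
elim: s p => [|y s IHs] p //= sz.
rewrite -cat_rcons IHs ?cat_rcons // f_swap //.
by move: sz; rewrite !size_cat /= ?size_cat /=; lia.
Qed.

Lemma swap_blocks p s1 s2 q : size (p ++ s1 ++ s2 ++ q) = m ->
  f (p ++ s1 ++ s2 ++ q) = f (p ++ s2 ++ s1 ++ q).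
Proof.
elim: s2 p => [|x s2 IHs] p //= sz.
rewrite swap_move_front // -cat_rcons IHs ?cat_rcons //.
by move: sz; rewrite !size_cat /= ?size_cat /=; lia.
Qed.

Lemma perm_swap_invariant s t : perm_eq s t -> size s = m -> f s = f t.
Proof.
move=> st; rewrite perm_sym in st.
apply: (catCA_perm_ind (P := fun u => size u = m -> f u = f t) _ st) => //.
move=> s1 s2 s3 IH sz; rewrite -IH; last by move: sz; rewrite !size_cat; lia.
exact: (swap_blocks (p := [::]) sz).
Qed.

End AdjacentSwapInvariance.

Section WordProducts.
Variables (T : eqType) (zero : T) (mul : T -> T -> T).
Hypothesis mulA : associative mul.
Local Notation prod := (nprod zero mul).

Lemma nprod_cons x w : w != [::] -> prod (x :: w) = mul x (prod w).
Proof. by case: w. Qed.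

Lemma nprod_cat s t : s != [::] -> t != [::] -> prod (s ++ t) = mul (prod s) (prod t).
Proof.
case: t => // y t; elim: s => [|x s IHs] // _ _.
case: s IHs => [|x' s] IHs //.
by rewrite cat_cons nprod_cons // IHs // [in RHS]nprod_cons // mulA.
Qed.

Lemma nprod_merge s a b t : prod (s ++ mul a b :: t) = prod (s ++ a :: b :: t).
Proof.
elim: s => [|x s IHs]; first by case: t => //= y t; rewrite mulA.
by rewrite !cat_cons !nprod_cons ?IHs //; case: s {IHs}.
Qed.

Variable n : nat.
Hypothesis n_ge2 : (2 <= n)%N.
Hypothesis nprod_cycle : forall u, size u = n -> prod u = prod (rot 1 u).

Lemma nprod_rot1S x w : size w = n -> prod (x :: w) = prod (rcons w x).
Proof.
case/lastP: w => [|w b] sw; first by move: n_ge2; rewrite -sw.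
case/lastP: w sw => [|w a] sw; first by move: n_ge2; rewrite -sw.
have wab : rcons (rcons w a) b = w ++ [:: a; b] by rewrite -!cats1 -catA.
rewrite wab -cat_cons -nprod_merge nprod_cycle; last first.
  by move: sw; rewrite wab !size_cat /=; lia.
by rewrite rot1_cons -cats1 -catA cat1s nprod_merge -cats1 -catA.
Qed.

Lemma nprod_catC s t : (size s + size t = n.+1)%N -> prod (s ++ t) = prod (t ++ s).
Proof.
elim: s t => [|x s IHs] t sz; first by rewrite cats0.
rewrite cat_cons nprod_rot1S; last by move: sz; rewrite size_cat /=; lia.
by rewrite rcons_cat IHs -?cat_rcons // size_rcons -addSnnS.
Qed.

Lemma nprod_swap_last p a b : size p = n.-1 -> prod (p ++ [:: a; b]) = prod (p ++ [:: b; a]).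
Proof.
move=> sp; rewrite -[p ++ _]cat_rcons -cats1 nprod_catC; last by rewrite size_cat sp /=; lia.
rewrite cat1s -cat_cons nprod_cat // nprod_cycle; last by rewrite /= sp; lia.
by rewrite rot1_cons -nprod_cat ?cat_rcons // -size_eq0 size_rcons.
Qed.

Lemma nprod_swap p x y q : size (p ++ x :: y :: q) = n.+1 ->
  prod (p ++ x :: y :: q) = prod (p ++ y :: x :: q).
Proof.
move=> sz; have xyE u v : p ++ u :: v :: q = (p ++ [:: u; v]) ++ q by rewrite -catA.
rewrite !xyE nprod_catC; last by move: sz; rewrite !size_cat /=; lia.
rewrite [RHS]nprod_catC; last by move: sz; rewrite !size_cat /=; lia.
by rewrite !catA nprod_swap_last //; move: sz; rewrite !size_cat /=; lia.
Qed.

Lemma nprod_perm s t : perm_eq s t -> size s = n.+1 -> prod s = prod t.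
Proof. by apply: perm_swap_invariant => p x y q; apply: nprod_swap. Qed.

End WordProducts.

Lemma map_cycle_perm_enum n : map (cycle_perm n) (enum 'I_n) = rot 1 (enum 'I_n).
Proof.
apply: (inj_map val_inj); rewrite map_rot -map_comp.
rewrite (eq_map (f := val \o cycle_perm n) (g := (fun i => i.+1 %% n) \o val)); last first.
  by move=> i; rewrite /= permE.
rewrite map_comp val_enum_ord; case: n => [|n] //.
rewrite [in RHS]/= rot1_cons -cats1 -addn1 iotaD map_cat /=.
rewrite add0n addn1 modnn -[iota 1 n]/(iota (1 + 0) n) (iotaDl 1 0); congr (_ ++ _).
by apply/eq_in_map => i; rewrite mem_iota => /andP[_ lt_in]; rewrite modn_small.
Qed.

Lemma satisfies_cycle_nprod_rot1 (K : fieldType) (A : lmodType K) (mul : A -> A -> A) n :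
  satisfies_identity mul (cycle_perm n) ->
  forall u, size u = n -> nprod 0%R mul u = nprod 0%R mul (rot 1 u).
Proof.
move=> cyc u /eqP su; have := cyc (tnth (Tuple su)).
rewrite map_tnth_enum (map_comp (tnth _)) map_cycle_perm_enum map_rot.
by rewrite map_tnth_enum; apply.
Qed.

Lemma perm_enum_ord m (tau : 'S_m) : perm_eq (enum 'I_m) (map tau (enum 'I_m)).
Proof.
apply: uniq_perm => [||i]; first exact: enum_uniq.
  by rewrite map_inj_uniq ?enum_uniq //; exact: perm_inj.
by rewrite mem_enum -[i](permKV tau) map_f ?mem_enum.
Qed.

Lemma nprod_perm_eventually_commutative (K : fieldType) (A : lmodType K) (mul : A -> A -> A) m :
  (forall s t, perm_eq s t -> size s = m -> nprod 0%R mul s = nprod 0%R mul t) ->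
  eventually_commutative mul m.
Proof.
move=> nprod_perm tau a; apply: nprod_perm; last by rewrite size_map size_enum_ord.
by rewrite (map_comp a tau); apply/perm_map/perm_enum_ord.
Qed.

Theorem theorem3p6 (K : fieldType) (A : lmodType K) (mul : A -> A -> A) (n : nat) :
  (2 <= n)%N ->
  assoc_algebra mul ->
  satisfies_identity mul (cycle_perm n) ->
  eventually_commutative mul n.+1.
Proof.
move=> n_ge2 [mulA _ _] cyc; apply: nprod_perm_eventually_commutative.
exact: (nprod_perm mulA n_ge2 (satisfies_cycle_nprod_rot1 cyc)).
Qed.
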